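(* The class of I$^2$-GNNs can count $3$-paths and $4$-paths at node level: for $L\in\{3,4\}$ and all node-graph pairs $(i_1,G_1),(i_2,G_2)$ with $C(L\text{-path},i_1,G_1)\ne C(L\text{-path},i_2,G_2)$, there exists an I$^2$-GNN whose node representations satisfy $h_{i_1}(G_1)\ne h_{i_2}(G_2)$.
   Context: Graphs are finite, simple, undirected, $G=(V,E)$, possibly carrying node attributes $x_v$ and edge attributes $e_{u,v}$ (a fixed constant when absent). $N(v)$ is the neighbour set of $v$. For $L\ge1$, an $L$-path is a sequence of edges $(v_1,v_2),\dots,(v_L,v_{L+1})$ with $v_1,\dots,v_{L+1}$ pairwise distinct; two paths are identified when their edge sets coincide; $C(L\text{-path},i,G)$ is the number of inequivalent $L$-paths starting from $i$ (i.e. with $v_1=i$). A class $\mathcal F$ of functions on node-graph pairs can count $S$ at node level if for all $(i_1,G_1),(i_2,G_2)$ with $C(S,i_1,G_1)\ne C(S,i_2,G_2)$ there is $f\in\mathcal F$ with $f(i_1,G_1)\ne f(i_2,G_2)$. I$^2$-GNNs. An I$^2$-GNN is specified by an integer $K\ge1$, $T$, arbitrary functions $M_t$ (values in some $\mathbb R^{d_t}$), $U_t$, and arbitrary readouts $R_{\text{edge}},R_{\text{node}}$ on finite multisets. For each root $i\in V$ let $(V_i,E_i)$ be the subgraph of $G$ induced by nodes at shortest-path distance at most $K$ from $i$, and $N_i(k)=\{l\in V_i:(k,l)\in E_i\}$. For each $j\in N(i)$ and $k\in V_i$: $h^{(0)}_{i,j,k}=x_k\oplus\mathbb 1_{k=i}\oplus\mathbb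 1_{k=j}$, $h^{(t+1)}_{i,j,k}=U_t\big(h^{(t)}_{i,j,k},\sum_{l\in N_i(k)}M_t(h^{(t)}_{i,j,k},h^{(t)}_{i,j,l},e_{k,l})\big)$; then $h_{i,j}=R_{\text{edge}}(\{\!\{h^{(T)}_{i,j,k}:k\in V_i\}\!\})$ and $h_i=R_{\text{node}}(\{\!\{h_{i,j}:j\in N(i)\}\!\})$. The node-level function computed is $(i,G)\mapsto h_i$; the class of I$^2$-GNNs consists of all such choices. *)

From HB Require Import structures.
From mathcomp Require Import all_boot all_order all_algebra.
From mathcomp Require Import reals.
Set Implicit Arguments. Unset Strict Implicit. Unset Printing Implicit Defensive.
Import Order.TTheory GRing.Theory Num.Theory.
Local Open Scope ring_scope.

Record graph (R : realType) (dx de : nat) := Graph {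
  gV :> finType;
  gadj : rel gV;
  gadj_sym : symmetric gadj;
  gadj_irr : irreflexive gadj;
  gx : gV -> 'rV[R]_dx;
  ge : gV -> gV -> 'rV[R]_de;
  ge_sym : forall u v, ge u v = ge v u
}.

Section Defs.
Variables (R : realType) (dx de : nat).

Definition nbr (G : graph R dx de) (v : G) : {set G} := [set u | gadj v u].

Fixpoint ball (G : graph R dx de) (i : G) (n : nat) : {set G} :=
  match n with
  | 0 => [set i]
  | n'.+1 => ball i n' :|: [set u | [exists w in ball i n', gadj w u]]
  end.

Definition is_Lpath (G : graph R dx de) (L : nat) (i : G) (p : L.+1.-tuple G) :=
  [&& uniq p, tnth p ord0 == i &
      [forall k : 'I_L, gadj (tnth p (widen_ord (leqnSn L) k)) (tnth p (lift ord0 k))]].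

Definition path_edges (G : graph R dx de) (L : nat) (p : L.+1.-tuple G) : {set {set G}} :=
  [set [set tnth p (widen_ord (leqnSn L) k); tnth p (lift ord0 k)] | k : 'I_L].

(* number of inequivalent L-paths starting from i (paths identified when their
   edge sets coincide) *)
Definition Lpath_count (L : nat) (G : graph R dx de) (i : G) : nat :=
  #|[set path_edges p | p : L.+1.-tuple G & is_Lpath i p]|.

(* readout on finite multisets: a function on sequences invariant under permutation *)
Definition multiset_fun (A B : eqType) (f : seq A -> B) :=
  forall s1 s2, perm_eq s1 s2 -> f s1 = f s2.

Record I2GNN := MkI2GNN {
  nK : nat;
  nK_ge1 : (1 <= nK)%N;
  nT : nat;
  dh : nat -> nat;     (* dimension of h^{(t+1)} is dh t *)
  dm : nat -> nat;
  dE : nat;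
  dN : nat;
  Mfun : forall t : nat,
    'rV[R]_(match t with 0 => (dx + 1 + 1)%N | t'.+1 => dh t' end) ->
    'rV[R]_(match t with 0 => (dx + 1 + 1)%N | t'.+1 => dh t' end) ->
    'rV[R]_de -> 'rV[R]_(dm t);
  Ufun : forall t : nat,
    'rV[R]_(match t with 0 => (dx + 1 + 1)%N | t'.+1 => dh t' end) ->
    'rV[R]_(dm t) -> 'rV[R]_(dh t);
  Redge : seq 'rV[R]_(match nT with 0 => (dx + 1 + 1)%N | t'.+1 => dh t' end) -> 'rV[R]_dE;
  Redge_ms : multiset_fun Redge;
  Rnode : seq 'rV[R]_dE -> 'rV[R]_dN;
  Rnode_ms : multiset_fun Rnode
}.

Definition hdim (N : I2GNN) (t : nat) : nat :=
  match t with 0 => (dx + 1 + 1)%N | t'.+1 => dh N t' end.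

Definition bool_row (b : bool) : 'rV[R]_1 := const_mx (b%:R).

Section Run.
Variables (N : I2GNN) (G : graph R dx de) (i j : G).

Definition Vi : {set G} := ball i (nK N).
Definition Ni (k : G) : {set G} := [set l in Vi | (k \in Vi) && gadj k l].

Fixpoint hnode (t : nat) : G -> 'rV[R]_(hdim N t) :=
  match t as t0 return G -> 'rV[R]_(hdim N t0) with
  | 0 => fun k => row_mx (row_mx (gx k) (bool_row (k == i))) (bool_row (k == j))
  | t'.+1 => fun k =>
      @Ufun N t' (hnode t' k) (\sum_(l in Ni k) @Mfun N t' (hnode t' k) (hnode t' l) (ge k l))
  end.

Definition hedge : 'rV[R]_(dE N) :=
  @Redge N [seq hnode (nT N) k | k <- enum Vi].
End Run.

Definition I2GNN_out (N : I2GNN) (G : graph R dx de) (i : G) : 'rV[R]_(dN N) :=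
  @Rnode N [seq hedge N i j | j <- enum (nbr i)].

End Defs.

(* Two rounds of message passing on the K-hop subgraph of i, with i and one neighbour j marked,
   let every node k compute W k, its number of neighbours outside {i, j}, and then
   S k = sum over neighbours l outside {i, j} of (W l - [k outside {i, j}]), which is the number
   of walks k - l - m with l, m outside {i, j} and m <> k.  Reading W k (resp. S k) at the
   neighbours k <> i of j and summing over j in N(i) counts the vertex sequences i j k l
   (resp. i j k l m) forming a 3-path (resp. 4-path).  A path from a fixed start is determined
   by its edge set, so these are exactly C(3-path, i, G) and C(4-path, i, G); as counts are
   natural numbers, different counts give different real outputs. *)

From HB Require Import structures.
From mathcomp Require Import all_boot all_order all_algebra.
From mathcomp Require Import reals zify.
Set Implicit Arguments. Unset Strict Implicit. Unset Printing Implicit Defensive.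
Import GRing.Theory Num.Theory.

Section BigTuple.
Variables (R : Type) (idx : R) (op : Monoid.com_law idx) (T : finType).

Lemma big_tuple0 (F : 0.-tuple T -> R) : \big[op/idx]_(t : 0.-tuple T) F t = F [tuple].
Proof. by apply: big_pred1 => t; apply/esym/eqP; exact: tuple0. Qed.

Lemma big_tupleS n (F : n.+1.-tuple T -> R) :
  \big[op/idx]_(t : n.+1.-tuple T) F t =
  \big[op/idx]_(x : T) \big[op/idx]_(t : n.-tuple T) F [tuple of x :: t].
Proof.
rewrite pair_big (reindex (fun xt : T * n.-tuple T => [tuple of xt.1 :: xt.2])) //=.
exists (fun t => (thead t, behead_tuple t)) => [[x t] _ | t _] /=.
  by rewrite theadE; congr pair; apply: val_inj.
by rewrite [RHS]tuple_eta.
Qed.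

End BigTuple.

Lemma sum_nat_mkcondM (T : finType) (P : pred T) (F : T -> nat) :
  \sum_(x | P x) F x = \sum_x P x * F x.
Proof. by rewrite big_mkcond; apply: eq_bigr => x _; case: (P x); rewrite ?mul1n. Qed.

Section NatrSums.
Local Open Scope ring_scope.
Variables (R : pzSemiRingType) (T : finType) (A : {pred T}).

Lemma sumr_mkcondM (P : pred T) (F : T -> R) :
  \sum_(x in A | P x) F x = \sum_(x in A) (P x)%:R * F x.
Proof. by rewrite big_mkcondr; apply: eq_bigr => x _; case: (P x); rewrite ?mul1r ?mul0r. Qed.

Lemma sumr_eq_mem (a : T) : \sum_(x in A) (x == a)%:R = (a \in A)%:R :> R.
Proof.
have [aA | naA] := boolP (a \in A).
  by rewrite (bigD1 a) //= eqxx big1 ?addr0 // => x /andP[_ /negbTE->].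
by rewrite big1 // => x xA; case: eqP xA naA => // -> ->.
Qed.

End NatrSums.

Lemma forall_ordS n (P : pred 'I_n.+1) :
  [forall k, P k] = P ord0 && [forall k : 'I_n, P (lift ord0 k)].
Proof. by rewrite -!(big_andE predT) big_ord_recl. Qed.

Lemma mem_set2_nth (T : finType) (s : seq T) x0 x a :
  uniq s -> x < size s -> a.+1 < size s ->
  (nth x0 s x \in [set nth x0 s a; nth x0 s a.+1]) = (x == a) || (x == a.+1).
Proof. by move=> us xs axs; rewrite !inE !nth_uniq // ltnW. Qed.

Section Paths.
Variables (R : realType) (dx de : nat) (G : graph R dx de).

Lemma adj_neq (x y : G) : gadj x y -> (x == y) = false.
Proof. by apply: contraTF => /eqP->; rewrite gadj_irr. Qed.

Lemma path_edgesP L (p : L.+1.-tuple G) x0 e :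
  reflect (exists2 a, a < L & e = [set nth x0 p a; nth x0 p a.+1]) (e \in path_edges p).
Proof.
apply: (iffP imsetP) => [[k _ ->] | [a ltaL ->]].
  by exists k; rewrite ?ltn_ord // !(tnth_nth x0).
by exists (Ordinal ltaL); rewrite // !(tnth_nth x0).
Qed.

Lemma path_edges_inj L (i : G) (p q : L.+1.-tuple G) :
  is_Lpath i p -> is_Lpath i q -> path_edges p = path_edges q -> p = q.
Proof.
rewrite /is_Lpath !(tnth_nth i) /= => /and3P[up /eqP p0 _] /and3P[uq /eqP q0 _] Epq.
have sp : size p = L.+1 := size_tuple p.
have sq : size q = L.+1 := size_tuple q.
suff eq_upto n : n <= L -> forall m, m <= n -> nth i p m = nth i q m.
  apply: val_inj; apply: (@eq_from_nth _ i) => [|m]; first by rewrite sp sq.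
  by rewrite sp ltnS; exact: eq_upto.
elim: n => [_ m | n IHn ltnL m]; first by rewrite leqn0 => /eqP->; rewrite p0 q0.
have {}IHn := IHn (ltnW ltnL).
rewrite leq_eqVlt => /orP[/eqP-> {m} | ]; last exact: IHn.
have pq_n := IHn n (leqnn n).
have ltnL1 : n < L.+1 := ltnW ltnL.
(* The edge {p_n, p_n+1} is an edge {q_a, q_a+1} of q containing q_n = p_n, so a = n or
   a + 1 = n; in the second case p_n+1 would lie in {q_n-1, q_n} = {p_n-1, p_n}. *)
have : [set nth i p n; nth i p n.+1] \in path_edges q.
  by rewrite -Epq; apply/path_edgesP; exists n.
case/(path_edgesP _ i) => a ltaL Epq_n.
have : nth i q n \in [set nth i q a; nth i q a.+1] by rewrite -Epq_n -pq_n !inE eqxx.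
rewrite mem_set2_nth ?sq // => /orP[] /eqP n_a.
- subst a; have : nth i p n.+1 \in [set nth i p n; nth i q n.+1].
    by rewrite pq_n -Epq_n !inE eqxx orbT.
  by rewrite !inE nth_uniq ?sp ?(gtn_eqF (ltnSn n)) // => /eqP.
- subst n; have : nth i p a.+2 \in [set nth i q a; nth i q a.+1].
    by rewrite -Epq_n !inE eqxx orbT.
  rewrite -(IHn a) ?leqnSn // -(IHn a.+1) //.
  by rewrite mem_set2_nth ?sp // => /orP[] /eqP; lia.
Qed.

Lemma Lpath_countE L (i : G) :
  Lpath_count L i = \sum_(q : L.-tuple G) is_Lpath i [tuple of i :: q].
Proof.
rewrite /Lpath_count card_in_imset => [|p q]; last by rewrite !inE; exact: path_edges_inj.
rewrite -sum1dep_card big_mkcond big_tupleS (bigD1 i) //= [X in _ + X]big1 ?addn0.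
  by apply: eq_bigr => q _; case: is_Lpath.
move=> x /negbTE nxi; apply: big1 => q _.
by rewrite /is_Lpath /= nxi andbF.
Qed.

Lemma is_Lpath0 (x : G) : is_Lpath x [tuple x].
Proof. by apply/and3P; split=> //; apply/forallP => -[]. Qed.

Lemma is_Lpath_cons L (x y : G) (q : L.-tuple G) :
  is_Lpath x [tuple of x :: [tuple of y :: q]] =
  [&& gadj x y, x \notin y :: q & is_Lpath y [tuple of y :: q]].
Proof.
rewrite /is_Lpath forall_ordS /= !eqxx.
set F := [forall k, _]; set F' := [forall k, _].
have -> : F = F' by apply: eq_forallb => k; rewrite !(tnth_nth x).
rewrite !(tnth_nth x) /=.
by case: (gadj x y); rewrite ?andbF //= !andbA.
Qed.

Lemma Lpath_count3 (i : G) : Lpath_count 3 i =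
  \sum_(j in nbr i) \sum_(k in nbr j | k != i) \sum_(l in nbr k) ((l != i) && (l != j)).
Proof.
rewrite Lpath_countE big_tupleS [RHS]sum_nat_mkcondM; apply: eq_bigr => j _.
rewrite big_tupleS [in RHS]sum_nat_mkcondM big_distrr; apply: eq_bigr => k _.
rewrite big_tupleS [in RHS]sum_nat_mkcondM !big_distrr; apply: eq_bigr => l _.
rewrite big_tuple0 !is_Lpath_cons is_Lpath0 /= !mulnb !inE; congr nat_of_bool.
case ij: (gadj i j); case jk: (gadj j k); case kl: (gadj k l); rewrite ?andbF //=.
rewrite (adj_neq ij) (adj_neq jk) (adj_neq kl) ![_ == i]eq_sym [l == j]eq_sym.
by case: (i == k); case: (i == l); case: (j == l).
Qed.

Lemma Lpath_count4 (i : G) : Lpath_count 4 i =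
  \sum_(j in nbr i) \sum_(k in nbr j | k != i) \sum_(l in nbr k | (l != i) && (l != j))
    \sum_(m in nbr l) [&& m != i, m != j & m != k].
Proof.
rewrite Lpath_countE big_tupleS [RHS]sum_nat_mkcondM; apply: eq_bigr => j _.
rewrite big_tupleS [in RHS]sum_nat_mkcondM big_distrr; apply: eq_bigr => k _.
rewrite big_tupleS [in RHS]sum_nat_mkcondM !big_distrr; apply: eq_bigr => l _.
rewrite big_tupleS [in RHS]sum_nat_mkcondM !big_distrr; apply: eq_bigr => m _.
rewrite big_tuple0 !is_Lpath_cons is_Lpath0 /= !mulnb !inE; congr nat_of_bool.
case ij: (gadj i j); case jk: (gadj j k); case kl: (gadj k l); case lm: (gadj l m);
  rewrite ?andbF //=.
rewrite (adj_neq ij) (adj_neq jk) (adj_neq kl) (adj_neq lm).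
rewrite ![_ == i]eq_sym ![_ == j]eq_sym [m == k]eq_sym.
by case: (i == k); case: (i == l); case: (i == m); case: (j == l); case: (j == m); case: (k == m).
Qed.

End Paths.
Section Balls.
Variables (R : realType) (dx de : nat) (G : graph R dx de) (i : G).

Lemma ball_self n : i \in ball i n.
Proof. by elim: n => [|n IHn] /=; rewrite ?inE ?IHn. Qed.

Lemma ball_adj n u v : u \in ball i n -> gadj u v -> v \in ball i n.+1.
Proof. by move=> ui uv; rewrite /= !inE; apply/orP; right; apply/existsP; exists u; rewrite ui. Qed.

Lemma ball_mono n m : (n <= m)%N -> {subset ball i n <= ball i m}.
Proof.
move=> /subnK <-; elim: (m - n)%N => // d IHd u /IHd.
by rewrite addSn /= inE => ->.
Qed.

Variable N : I2GNN R dx de.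

Lemma Ni_sym k l : (l \in Ni N i k) = (k \in Ni N i l).
Proof. by rewrite !inE gadj_sym; case: (l \in _); case: (k \in _). Qed.

Lemma Ni_nbr n k : (n < nK N)%N -> k \in ball i n -> Ni N i k = nbr k.
Proof.
move=> ltnK kn; apply/setP => l; rewrite !inE /Vi (ball_mono (ltnW ltnK) kn).
by case kl: (gadj k l); rewrite ?andbF // (ball_mono ltnK (ball_adj kn kl)).
Qed.

Lemma big_Vi_nbr (U : Type) (idx : U) (op : U -> U -> U) n j (P : pred G) (F : G -> U) :
  (n < nK N)%N -> j \in ball i n ->
  \big[op/idx]_(k in Vi N i | (j \in Ni N i k) && P k) F k =
  \big[op/idx]_(k in nbr j | P k) F k.
Proof.
move=> ltnK jn; apply: eq_bigl => k; rewrite Ni_sym (Ni_nbr ltnK jn) !inE /Vi.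
by case jk: (gadj j k); rewrite ?andbF // (ball_mono ltnK (ball_adj jn jk)).
Qed.

End Balls.

Section PathNet.
Variables (R : realType) (dx de : nat).
Local Open Scope ring_scope.

Definition row4 (a b c d : R) : 'rV[R]_4 := \row_(x < 4) [:: a; b; c; d]`_x.

Definition feat (v : 'rV[R]_4) (n : nat) : R := v 0 (inord n).

Lemma feat_row4 a b c d n : (n < 4)%N -> feat (row4 a b c d) n = [:: a; b; c; d]`_n.
Proof. by move=> ltn4; rewrite /feat mxE inordK. Qed.

Lemma feat_sum (I : finType) (A : {pred I}) (F : I -> 'rV[R]_4) n :
  feat (\sum_(l in A) F l) n = \sum_(l in A) feat (F l) n.
Proof. exact: summxE. Qed.

Definition root_flag (h : 'rV[R]_(dx + 1 + 1)) : R := rsubmx (lsubmx h) 0 0.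
Definition target_flag (h : 'rV[R]_(dx + 1 + 1)) : R := rsubmx h 0 0.

Lemma root_flagE x (a b : bool) :
  root_flag (row_mx (row_mx x (bool_row R a)) (bool_row R b)) = a%:R.
Proof. by rewrite /root_flag !row_mxKl row_mxKr mxE. Qed.

Lemma target_flagE x (a b : bool) :
  target_flag (row_mx (row_mx x (bool_row R a)) (bool_row R b)) = b%:R.
Proof. by rewrite /target_flag row_mxKr mxE. Qed.

Definition neither (a b : R) : R := ((a == 0) && (b == 0))%:R.

Lemma neither_nat (a b : bool) : neither a%:R b%:R = (~~ a && ~~ b)%:R.
Proof. by rewrite /neither !pnatr_eq0 !eqb0. Qed.

Definition sdim (t : nat) : nat := if t is 0 then (dx + 1 + 1)%N else 4%N.

(* Node states: h^(1)_k = ([k = i], [k \notin {i, j}], [k ~ j], W k) and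
   h^(2)_k = ([k = i], [k ~ j], W k, S k), with W and S as in the header. *)
Definition path_msg (t : nat) : 'rV[R]_(sdim t) -> 'rV[R]_(sdim t) -> 'rV[R]_de -> 'rV[R]_4 :=
  match t with
  | 0 => fun _ hl _ => row4 0 0 (target_flag hl) (neither (root_flag hl) (target_flag hl))
  | 1 => fun hk hl _ => row4 0 0 0 (feat hl 1 * (feat hl 3 - feat hk 1))
  | _ => fun _ _ _ => 0
  end.

Definition path_upd (t : nat) : 'rV[R]_(sdim t) -> 'rV[R]_4 -> 'rV[R]_4 :=
  match t with
  | 0 => fun h m => row4 (root_flag h) (neither (root_flag h) (target_flag h)) (feat m 2) (feat m 3)
  | 1 => fun h m => row4 (feat h 0) (feat h 2) (feat h 3) (feat m 3)
  | _ => fun _ _ => 0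
  end.

Definition path_readout (c : nat) (s : seq 'rV[R]_4) : 'rV[R]_1 :=
  const_mx (\sum_(v <- s) ((feat v 0 == 0) && (feat v 1 != 0))%:R * feat v c).

Definition sum_readout (n : nat) (s : seq 'rV[R]_n) : 'rV[R]_n := \sum_(v <- s) v.

Lemma path_readout_ms c : multiset_fun (path_readout c).
Proof. by move=> s1 s2 s12; rewrite /path_readout (perm_big _ s12). Qed.

Lemma sum_readout_ms n : multiset_fun (@sum_readout n).
Proof. by move=> s1 s2 s12; rewrite /sum_readout (perm_big _ s12). Qed.

(* Radius 4 makes N_i(l) = N(l) for every l within distance 3 of the root. *)
Definition path_net (c : nat) : I2GNN R dx de :=
  @MkI2GNN R dx de 4 isT 2 (fun _ => 4%N) (fun _ => 4%N) 1 1 path_msg path_upd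
    (path_readout c) (@path_readout_ms c) (@sum_readout 1) (@sum_readout_ms 1).

End PathNet.

Section PathNetRun.
Variables (R : realType) (dx de : nat) (c : nat) (G : graph R dx de) (i j : G).
Local Open Scope ring_scope.
Local Notation N := (path_net R dx de c).

Definition fresh (k : G) : bool := (k != i) && (k != j).
Definition nfresh (k : G) : nat := \sum_(l in Ni N i k) fresh l.

Lemma hnode1E k :
  hnode N i j 1 k = row4 (k == i)%:R (fresh k)%:R (j \in Ni N i k)%:R (nfresh k)%:R.
Proof.
rewrite /= root_flagE target_flagE neither_nat !feat_sum /nfresh natr_sum -sumr_eq_mem.
by congr row4; apply: eq_bigr => l _; rewrite feat_row4 //= ?root_flagE ?target_flagE ?neither_nat.
Qed.

Lemma hnode2E k :
  hnode N i j 2 k = row4 (k == i)%:R (j \in Ni N i k)%:R (nfresh k)%:R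
    (\sum_(l in Ni N i k | fresh l) ((nfresh l)%:R - (fresh k)%:R)).
Proof.
have -> : hnode N i j 2 k = @path_upd R dx 1 (hnode N i j 1 k)
    (\sum_(l in Ni N i k) @path_msg R dx de 1 (hnode N i j 1 k) (hnode N i j 1 l) (ge k l)) by [].
under eq_bigr => l _ do rewrite !hnode1E.
rewrite hnode1E /= feat_sum !feat_row4 //= sumr_mkcondM.
by congr row4; apply: eq_bigr => l _; rewrite !feat_row4.
Qed.

Lemma nfreshD1 k l : l \in Ni N i k ->
  nfresh l = (fresh k + \sum_(m in Ni N i l) (fresh m && (m != k)))%N.
Proof.
rewrite Ni_sym => kl; rewrite /nfresh (bigD1 k) // [in RHS](bigD1 k) //= eqxx andbF.
by congr addn; apply: eq_bigr => m /andP[_ ->]; rewrite andbT.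
Qed.

Lemma feat3_hnode2 k :
  feat (hnode N i j 2 k) 3 =
  (\sum_(l in Ni N i k | fresh l) \sum_(m in Ni N i l) (fresh m && (m != k)))%:R.
Proof.
rewrite hnode2E feat_row4 //= natr_sum; apply: eq_bigr => l /andP[kl _].
by rewrite (nfreshD1 kl) natrD addrAC subrr add0r.
Qed.

Lemma hedgeE :
  hedge N i j = const_mx (\sum_(k in Vi N i | (j \in Ni N i k) && (k != i)) feat (hnode N i j 2 k) c).
Proof.
have -> : hedge N i j = path_readout c [seq hnode N i j 2 k | k <- enum (Vi N i)] by [].
rewrite /path_readout big_map big_enum sumr_mkcondM; congr const_mx.
apply: eq_bigr => k _; rewrite hnode2E [feat _ 0]feat_row4 // [feat _ 1]feat_row4 //=.
by rewrite !pnatr_eq0 !eqb0 negbK andbC.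
Qed.

End PathNetRun.

Section PathNetOut.
Variables (R : realType) (dx de : nat) (G : graph R dx de).
Local Open Scope ring_scope.

Lemma path_net_out c (i : G) :
  I2GNN_out (path_net R dx de c) i =
  const_mx (\sum_(j in nbr i) \sum_(k in nbr j | k != i) feat (hnode (path_net R dx de c) i j 2 k) c).
Proof.
have -> : I2GNN_out (path_net R dx de c) i =
  \sum_(j <- enum (nbr i)) hedge (path_net R dx de c) i j by rewrite /I2GNN_out /= /sum_readout big_map.
apply/rowP => x; rewrite big_enum summxE !mxE; apply: eq_bigr => j; rewrite inE => ij.
have j1 : j \in ball i 1 := ball_adj (ball_self i 0) ij.
by rewrite hedgeE mxE (big_Vi_nbr _ _ _ _ _ j1).
Qed.

Lemma path_net_count3 (i : G) : I2GNN_out (path_net R dx de 2) i = const_mx (Lpath_count 3 i)%:R.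
Proof.
rewrite path_net_out Lpath_count3 natr_sum; congr const_mx; apply: eq_bigr => j.
rewrite inE natr_sum => ij; apply: eq_bigr => k; rewrite inE => /andP[jk _].
have k2 : k \in ball i 2 := ball_adj (ball_adj (ball_self i 0) ij) jk.
by rewrite hnode2E feat_row4 //= /nfresh (Ni_nbr _ k2).
Qed.

Lemma path_net_count4 (i : G) : I2GNN_out (path_net R dx de 3) i = const_mx (Lpath_count 4 i)%:R.
Proof.
rewrite path_net_out Lpath_count4 natr_sum; congr const_mx; apply: eq_bigr => j.
rewrite inE natr_sum => ij; apply: eq_bigr => k; rewrite inE => /andP[jk _].
have k2 : k \in ball i 2 := ball_adj (ball_adj (ball_self i 0) ij) jk.
rewrite feat3_hnode2 (Ni_nbr _ k2) // /fresh; congr _%:R; apply: eq_bigr => l /andP[kl _].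
rewrite inE in kl; have l3 : l \in ball i 3 := ball_adj k2 kl.
by rewrite (Ni_nbr _ l3) //; apply: eq_bigr => m _; rewrite -andbA.
Qed.

End PathNetOut.

Theorem theorem4 (R : realType) (dx de : nat) (L : nat) :
  (L = 3 \/ L = 4)%N ->
  forall (G1 : graph R dx de) (i1 : G1) (G2 : graph R dx de) (i2 : G2),
    Lpath_count L i1 <> Lpath_count L i2 ->
    exists N : I2GNN R dx de, I2GNN_out N i1 <> I2GNN_out N i2.
Proof.
have const_natr_inj m n : const_mx (m%:R : R)%R = const_mx n%:R%R :> 'rV_1 -> m = n.
  by move/rowP/(_ ord0); rewrite !mxE => /eqP; rewrite eqr_nat => /eqP.
case=> -> G1 i1 G2 i2 neq_count.
  by exists (path_net R dx de 2); rewrite !path_net_count3 => /const_natr_inj.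
by exists (path_net R dx de 3); rewrite !path_net_count4 => /const_natr_inj.
Qed.
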